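(* Let $\mathfrak a$ be a Euclidean space of dimension $n$, $\Phi\subset\mathfrak a^*$ a (possibly non-reduced) root system with a chosen ordering, positive roots $\Phi^+$ and simple roots $\alpha_1,\dots,\alpha_n$; let $\omega_1,\dots,\omega_n\in\mathfrak a$ be defined by $\alpha_i(\omega_j)=\delta_{ij}$, let $\mathfrak a_+=\{\mathbf z\in\mathfrak a:\alpha_i(\mathbf z)\ge0\ \forall i\}$, and let $\rho=\sum_{\alpha\in\Phi^+}\alpha=\sum_{i=1}^nk_i\alpha_i$ (with $k_i>0$). Put $k=\min_{1\le i\le n}k_i/\|\omega_i\|$. Then there exist $C_1,C_2>0$ such that for all $z>0$, $$C_1\le\frac{\int_{\{\mathbf z\in\mathfrak a_+:\|\mathbf z\|\ge z\}}e^{-\rho(\mathbf z)}\,d\mathbf z}{e^{-kz}}\le C_2.$$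
   Context: $\|\cdot\|$ is the Euclidean norm on $\mathfrak a$ and $d\mathbf z$ is Lebesgue measure on $\mathfrak a$. *)

From HB Require Import structures.
From mathcomp Require Import all_boot all_order all_algebra.
From mathcomp Require Import all_classical all_reals all_analysis.
Set Implicit Arguments. Unset Strict Implicit. Unset Printing Implicit Defensive.
Import Order.TTheory GRing.Theory Num.Theory.
Local Open Scope ring_scope.

(* The Euclidean space a of dimension n is modelled as 'rV[R]_n with the
   standard inner product; a* is identified with a via this inner product. *)
Definition dotv (R : realType) (n : nat) (u v : 'rV[R]_n) : R :=
  \sum_(i < n) u 0 i * v 0 i.

Definition eucl_norm (R : realType) (n : nat) (v : 'rV[R]_n) : R :=
  Num.sqrt (dotv v v).

Definition cartan (R : realType) (n : nat) (b a : 'rV[R]_n) : R :=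
  2 * dotv b a / dotv a a.

(* (possibly non-reduced) crystallographic root system in R^n,
   given as a duplicate-free list of vectors *)
Definition is_root_system (R : realType) (n : nat) (Phi : seq 'rV[R]_n) : Prop :=
  [/\ uniq Phi,
      (0 : 'rV[R]_n) \notin Phi,
      \rank (\matrix_(i < size Phi) Phi`_i) = n,
      (forall a b, a \in Phi -> b \in Phi -> b - cartan b a *: a \in Phi) &
      (forall a b, a \in Phi -> b \in Phi -> cartan b a \is a Num.int)].

Definition simple_mx (R : realType) (n : nat) (alpha : 'I_n -> 'rV[R]_n) : 'M[R]_n :=
  \matrix_(i < n) alpha i.

Definition coords (R : realType) (n : nat) (alpha : 'I_n -> 'rV[R]_n) (v : 'rV[R]_n)
  : 'I_n -> R := fun i => (v *m invmx (simple_mx alpha)) 0 i.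

Definition is_base (R : realType) (n : nat) (Phi : seq 'rV[R]_n)
  (alpha : 'I_n -> 'rV[R]_n) : Prop :=
  [/\ (forall i, alpha i \in Phi),
      simple_mx alpha \in unitmx &
      (forall b, b \in Phi ->
         (forall i, coords alpha b i \is a Num.int) /\
         ((forall i, 0 <= coords alpha b i) \/ (forall i, coords alpha b i <= 0)))].

Definition positive_root (R : realType) (n : nat) (alpha : 'I_n -> 'rV[R]_n)
  (b : 'rV[R]_n) : bool := [forall i, 0 <= coords alpha b i].

(* rho = sum of the positive roots (no factor 1/2, as in the paper) *)
Definition rho_sum (R : realType) (n : nat) (Phi : seq 'rV[R]_n)
  (alpha : 'I_n -> 'rV[R]_n) : 'rV[R]_n :=
  \sum_(b <- Phi | positive_root alpha b) b.

(* Lebesgue integral over R^n of a nonnegative function, as the iterated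
   Lebesgue integral over the coordinates (Tonelli). *)
Fixpoint iter_integral (R : realType) (n : nat) : ('rV[R]_n -> \bar R) -> \bar R :=
  match n return ('rV[R]_n -> \bar R) -> \bar R with
  | 0 => fun f => f 0
  | m.+1 => fun f =>
      (\int[@lebesgue_measure R]_(x in [set: R])
         iter_integral (fun v : 'rV[R]_m => f (row_mx (const_mx x : 'rV[R]_1) v)))%E
  end.

Definition chamber (R : realType) (n : nat) (alpha : 'I_n -> 'rV[R]_n) : set 'rV[R]_n :=
  [set x | forall i, 0 <= dotv (alpha i) x].

Definition tail_integral (R : realType) (n : nat) (Phi : seq 'rV[R]_n)
  (alpha : 'I_n -> 'rV[R]_n) (z : R) : \bar R :=
  iter_integral (fun x : 'rV[R]_n =>
    if `[< chamber alpha x /\ z <= eucl_norm x >]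
    then (expR (- dotv (rho_sum Phi alpha) x))%:E else 0%E).

(* Write a point x of the chamber as x = \sum_j u_j e_j with e_j the unit vector
   along omega_j and u_j = alpha_j(x) |omega_j| >= 0, so that rho(x) >= k \sum_j u_j.
   The e_j pairwise make angles bounded away from 0, hence a point x of the chamber
   with |x| >= z lies within O(rho(x) - k z) of one of the points z e_i, and
   e^{-rho(x)} <= e^{-k z} \sum_i e^{-c |x - z e_i|_1}, whose integral is a constant
   times e^{-k z}.  Conversely, if k = kk_i0 / |omega_i0|, a unit cube around a
   suitable translate of (z / |omega_i0|) omega_i0 lies in the domain, and
   rho <= k z + C on it. *)

From HB Require Import structures.
From mathcomp Require Import all_boot all_order all_algebra.
From mathcomp Require Import all_classical all_reals all_analysis.
From mathcomp Require Import measurable_realfun.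
From mathcomp Require Import ring lra.

Set Implicit Arguments.
Unset Strict Implicit.
Unset Printing Implicit Defensive.
Import Order.TTheory GRing.Theory Num.Theory.
Local Open Scope ring_scope.

Local Notation "u ⋅ v" := (dotv u v) (at level 40).

Section euclidean_space.
Variables (R : realType) (n : nat).
Implicit Types (u v w y : 'rV[R]_n) (a : R).

Lemma dotvC u v : u ⋅ v = v ⋅ u.
Proof. by apply: eq_bigr => i _; rewrite mulrC. Qed.

Lemma dotvDl u v w : (u + v) ⋅ w = u ⋅ w + v ⋅ w.
Proof. by rewrite /dotv -big_split; apply: eq_bigr => i _; rewrite mxE mulrDl. Qed.

Lemma dotvZl a u w : (a *: u) ⋅ w = a * (u ⋅ w).
Proof. by rewrite /dotv mulr_sumr; apply: eq_bigr => i _; rewrite mxE mulrA. Qed.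

Lemma dotvBl u v w : (u - v) ⋅ w = u ⋅ w - v ⋅ w.
Proof. by rewrite dotvDl -scaleN1r dotvZl mulN1r. Qed.

Lemma dotv0l w : 0 ⋅ w = 0.
Proof. by rewrite /dotv big1 // => i _; rewrite mxE mul0r. Qed.

Lemma dotv_suml (I : Type) (r : seq I) (P : pred I) (F : I -> 'rV[R]_n) w :
  (\sum_(i <- r | P i) F i) ⋅ w = \sum_(i <- r | P i) F i ⋅ w.
Proof. by elim/big_rec2: _ => [|i y1 y2 _ <-]; rewrite ?dotv0l ?dotvDl. Qed.

Lemma dotvDr u v w : w ⋅ (u + v) = w ⋅ u + w ⋅ v.
Proof. by rewrite dotvC dotvDl !(dotvC _ w). Qed.

Lemma dotvZr a u w : w ⋅ (a *: u) = a * (w ⋅ u).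
Proof. by rewrite dotvC dotvZl dotvC. Qed.

Lemma dotvBr u v w : w ⋅ (u - v) = w ⋅ u - w ⋅ v.
Proof. by rewrite dotvC dotvBl !(dotvC _ w). Qed.

Lemma dotv_sumr (I : Type) (r : seq I) (P : pred I) (F : I -> 'rV[R]_n) w :
  w ⋅ (\sum_(i <- r | P i) F i) = \sum_(i <- r | P i) w ⋅ F i.
Proof. by rewrite dotvC dotv_suml; apply: eq_bigr => i _; rewrite dotvC. Qed.

Lemma dotv_mx u v : u ⋅ v = (u *m v^T) 0 0.
Proof. by rewrite mxE; apply: eq_bigr => i _; rewrite mxE. Qed.

Lemma dotvv_ge0 v : 0 <= v ⋅ v.
Proof. by apply: sumr_ge0 => i _; rewrite -expr2 sqr_ge0. Qed.

Lemma dotvv_eq0 v : (v ⋅ v == 0) = (v == 0).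
Proof.
apply/idP/eqP => [|->]; last by rewrite dotv0l.
rewrite /dotv psumr_eq0 => [/allP v0|]; last by move=> i _; rewrite -expr2 sqr_ge0.
apply/rowP => i; rewrite mxE; apply/eqP; rewrite -sqrf_eq0 expr2.
by have := v0 i (mem_index_enum i).
Qed.

Lemma dotv_lt1 u v : u ⋅ u = 1 -> v ⋅ v = 1 -> u != v -> u ⋅ v < 1.
Proof.
move=> u1 v1 uv; have : 0 < (u - v) ⋅ (u - v) by rewrite lt0r dotvv_eq0 subr_eq0 uv dotvv_ge0.
by rewrite !(dotvBl, dotvBr) u1 v1 (dotvC v u); lra.
Qed.

Lemma eucl_norm_ge0 v : 0 <= eucl_norm v.
Proof. exact: sqrtr_ge0. Qed.

Lemma eucl_norm_sqr v : eucl_norm v ^+ 2 = v ⋅ v.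
Proof. by rewrite sqr_sqrtr // dotvv_ge0. Qed.

Lemma eucl_norm_eq0 v : (eucl_norm v == 0) = (v == 0).
Proof. by rewrite -dotvv_eq0 -eucl_norm_sqr sqrf_eq0. Qed.

Lemma eucl_normZ a v : eucl_norm (a *: v) = `|a| * eucl_norm v.
Proof. by rewrite /eucl_norm dotvZl dotvZr mulrA -expr2 sqrtrM ?sqr_ge0 // sqrtr_sqr. Qed.

Lemma dotv_le_eucl_norm u v : u ⋅ v <= eucl_norm u * eucl_norm v.
Proof.
have [->|u0] := eqVneq u 0; first by rewrite dotv0l mulr_ge0 ?eucl_norm_ge0.
have [->|v0] := eqVneq v 0; first by rewrite dotvC dotv0l mulr_ge0 ?eucl_norm_ge0.
have up : 0 < eucl_norm u by rewrite lt0r eucl_norm_eq0 u0 eucl_norm_ge0.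
have vp : 0 < eucl_norm v by rewrite lt0r eucl_norm_eq0 v0 eucl_norm_ge0.
have := dotvv_ge0 (eucl_norm v *: u - eucl_norm u *: v).
rewrite !(dotvBl, dotvBr, dotvZl, dotvZr) -!eucl_norm_sqr (dotvC v u) => diff_ge0.
rewrite -(ler_pM2r (mulr_gt0 up vp)); nra.
Qed.

Lemma eucl_normD u v : eucl_norm (u + v) <= eucl_norm u + eucl_norm v.
Proof.
rewrite -(@ler_pXn2r _ 2) ?nnegrE ?addr_ge0 ?eucl_norm_ge0 //.
rewrite eucl_norm_sqr dotvDl !dotvDr (dotvC v u) sqrrD -!eucl_norm_sqr.
by have := dotv_le_eucl_norm u v; lra.
Qed.

Lemma eucl_norm_sum (I : Type) (r : seq I) (P : pred I) (F : I -> 'rV[R]_n) :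
  eucl_norm (\sum_(i <- r | P i) F i) <= \sum_(i <- r | P i) eucl_norm (F i).
Proof.
elim/big_rec2: _ => [|i y1 y2 _ IH]; first by rewrite /eucl_norm dotv0l sqrtr0.
exact: le_trans (eucl_normD _ _) (lerD (lexx _) IH).
Qed.

Definition l1_norm v := \sum_(m < n) `|v 0 m|.

Lemma l1_norm_ge0 v : 0 <= l1_norm v.
Proof. exact: sumr_ge0. Qed.

Lemma l1_norm_le_eucl_norm v : l1_norm v <= n%:R * eucl_norm v.
Proof.
rewrite mulr_natl -[n in _ *+ n]card_ord -sumr_const; apply: ler_sum => m _.
rewrite -(@ler_pXn2r _ 2) ?nnegrE ?eucl_norm_ge0 // eucl_norm_sqr real_normK ?num_real //.
rewrite /dotv (bigD1 m) //= -[X in X <= _]addr0 -expr2 lerD2l.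
by apply: sumr_ge0 => i _; rewrite -expr2 sqr_ge0.
Qed.

Lemma abs_dotv_le_l1_norm v y : (forall m, `|y 0 m| <= 1) -> `|v ⋅ y| <= l1_norm v.
Proof.
move=> y1; apply: le_trans (ler_norm_sum _ _ _) _; apply: ler_sum => m _.
by rewrite normrM -[X in _ <= X]mulr1 ler_wpM2l.
Qed.

End euclidean_space.

Lemma sumr_mul_delta (R : pzSemiRingType) (T : finType) (c : T -> R) j :
  \sum_i c i * (i == j)%:R = c j.
Proof. by rewrite (bigD1 j) //= eqxx mulr1 big1 ?addr0 // => i /negbTE->; rewrite mulr0. Qed.

Section dual_basis.
Variables (R : realType) (n : nat) (alpha omega : 'I_n -> 'rV[R]_n).
Hypothesis dual : forall i j, alpha i ⋅ omega j = (i == j)%:R.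

Lemma simple_mx_dual : simple_mx alpha *m (simple_mx omega)^T = 1%:M.
Proof.
apply/matrixP => i j; rewrite !mxE -dual.
by apply: eq_bigr => m _; rewrite !mxE.
Qed.

Lemma invmx_simple_mx : invmx (simple_mx alpha) = (simple_mx omega)^T.
Proof.
have [Aunit _] := mulmx1_unit simple_mx_dual.
by rewrite -[RHS]mul1mx -(mulVmx Aunit) -mulmxA simple_mx_dual mulmx1.
Qed.

Lemma coords_dual v i : coords alpha v i = v ⋅ omega i.
Proof.
rewrite /coords invmx_simple_mx dotv_mx !mxE.
by apply: eq_bigr => m _; rewrite !mxE.
Qed.

Lemma dual_expansion x : x = \sum_j (alpha j ⋅ x) *: omega j.
Proof.
have AtO : (simple_mx alpha)^T *m simple_mx omega = 1%:M.
  by rewrite -[simple_mx omega]trmxK -trmx_mul mulmx1C ?trmx1 // simple_mx_dual.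
rewrite -{1}[x]mulmx1 -AtO mulmxA mulmx_sum_row; apply: eq_bigr => j _.
rewrite rowK dotvC dotv_mx !mxE; congr (_ *: _).
by apply: eq_bigr => m _; rewrite !mxE.
Qed.

Lemma dotv_sum_dual j : alpha j ⋅ \sum_l omega l = 1.
Proof.
rewrite dotv_sumr (eq_bigr (fun l => 1 * (l == j)%:R)) ?sumr_mul_delta // => l _.
by rewrite dual mul1r eq_sym.
Qed.

Lemma eucl_norm_dual_gt0 j : 0 < eucl_norm (omega j).
Proof.
rewrite lt0r eucl_norm_ge0 eucl_norm_eq0 andbT; apply: contra_neq (oner_neq0 R) => o0.
by have := dual j j; rewrite eqxx o0 dotvC dotv0l => /esym.
Qed.

End dual_basis.

Section cone.
Variables (R : realType) (n N : nat) (e : 'I_N -> 'rV[R]_n) (g : R).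
Hypothesis e_unit : forall j, e j ⋅ e j = 1.
Hypothesis e_cos : forall j l, j != l -> e j ⋅ e l <= g.
Hypotheses (g_ge0 : 0 <= g) (g_le1 : g <= 1).
Variable u : 'I_N -> R.
Hypothesis u_ge0 : forall j, 0 <= u j.

Let x := \sum_j u j *: e j.
Let L := \sum_j u j.

Let eucl_norm_e j : eucl_norm (e j) = 1.
Proof. by rewrite /eucl_norm e_unit sqrtr1. Qed.

Let omg_ge0 : 0 <= 1 - g. Proof. by rewrite subr_ge0. Qed.

Lemma cone_dotvv_le : x ⋅ x <= g * L ^+ 2 + (1 - g) * \sum_j u j ^+ 2.
Proof.
have cos_le j l : e j ⋅ e l <= g + (1 - g) * (j == l)%:R.
  have [<-|/e_cos] := eqVneq j l; last by rewrite mulr0 addr0.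
  by rewrite e_unit mulr1 addrC subrK.
have inner j : \sum_l u j * u l * (g + (1 - g) * (j == l)%:R) = g * u j * L + (1 - g) * u j ^+ 2.
  transitivity (\sum_l (g * u j * u l + (1 - g) * u j * u l * (l == j)%:R)).
    by apply: eq_bigr => l _; rewrite eq_sym; ring.
  by rewrite big_split /= sumr_mul_delta -mulr_sumr /L; ring.
apply: (@le_trans _ _ (\sum_j \sum_l u j * u l * (g + (1 - g) * (j == l)%:R))).
  rewrite dotv_suml; apply: ler_sum => j _; rewrite dotvZl dotv_sumr mulr_sumr.
  apply: ler_sum => l _; rewrite dotvZr mulrA.
  by apply: ler_wpM2l; [exact: mulr_ge0 | exact: cos_le].
under eq_bigr => j _ do rewrite inner.
by rewrite big_split /= -mulr_suml -!mulr_sumr -/L expr2 mulrA.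
Qed.

Lemma eucl_norm_cone_term j : eucl_norm (u j *: e j) = u j.
Proof. by rewrite eucl_normZ eucl_norm_e mulr1 ger0_norm. Qed.

Lemma cone_eucl_norm_le : eucl_norm x <= L.
Proof.
rewrite /x /L; apply: le_trans (eucl_norm_sum _ _ _) _.
by under eq_bigr => j _ do rewrite eucl_norm_cone_term.
Qed.

Lemma cone_defect i : (forall j, u j <= u i) ->
  (1 - g) * (L - u i) <= 2 * (L - eucl_norm x).
Proof.
move=> umax.
have ui_le : u i <= L by rewrite /L (bigD1 i) //= lerDl sumr_ge0.
have sqr_le : \sum_j u j ^+ 2 <= u i * L.
  by rewrite /L mulr_sumr; apply: ler_sum => j _; rewrite expr2 ler_wpM2r.
have x_le := cone_eucl_norm_le; have x_ge0 := eucl_norm_ge0 x.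
have xx_le := cone_dotvv_le; rewrite -eucl_norm_sqr in xx_le.
have [L0|L_neq0] := eqVneq L 0.
  have ui0 : u i = 0 by apply/eqP; rewrite eq_le u_ge0 andbT -L0.
  by rewrite L0 ui0; lra.
have L_gt0 : 0 < L by rewrite lt0r L_neq0 (le_trans (u_ge0 i)).
(* (1 - g) L (L - u_i) <= L^2 - |x|^2 = (L - |x|) (L + |x|) <= 2 L (L - |x|) *)
rewrite -(ler_pM2r L_gt0).
have := ler_wpM2l omg_ge0 sqr_le.
have : (L - eucl_norm x) * (L + eucl_norm x) <= (L - eucl_norm x) * (2 * L).
  by apply: ler_wpM2l; lra.
nra.
Qed.

Lemma cone_near_ray : (0 < N)%N -> forall z, z <= eucl_norm x ->
  exists i, (1 - g) * eucl_norm (x - z *: e i) <= 5 * (L - z).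
Proof.
move=> N_gt0 z z_le.
have [i _ umax] := @arg_maxP _ _ 'I_N (Ordinal N_gt0) xpredT u isT.
exists i.
have L_split : L = u i + \sum_(j | j != i) u j by rewrite /L (bigD1 i).
have rest_le : eucl_norm (\sum_(j | j != i) u j *: e j) <= L - u i.
  rewrite L_split addrC addKr; apply: le_trans (eucl_norm_sum _ _ _) _.
  by under eq_bigr => j _ do rewrite eucl_norm_cone_term.
have dist_le : eucl_norm (x - z *: e i) <= `|u i - z| + (L - u i).
  have -> : x - z *: e i = (u i - z) *: e i + \sum_(j | j != i) u j *: e j.
    by rewrite /x (bigD1 i) //= addrAC -scalerBl.
  apply: le_trans (eucl_normD _ _) _.
  by rewrite eucl_normZ eucl_norm_e mulr1 lerD2l.
(* (1 - g) |x - z e_i| <= (1 - g) ((L - z) + 2 (L - u_i)) <= (L - z) + 4 (L - |x|) *)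
have rest_ge0 : 0 <= \sum_(j | j != i) u j by apply: sumr_ge0.
have x_le := cone_eucl_norm_le.
have abs_le : `|u i - z| <= (L - z) + (L - u i) by rewrite ler_norml; apply/andP; split; lra.
have := ler_wpM2l omg_ge0 (le_trans dist_le (lerD abs_le (lexx _))).
have := cone_defect (fun j => umax j isT).
have : (1 - g) * (L - z) <= L - z.
  by apply: ler_piMl; rewrite ?subr_ge0 ?gerBl //; exact: le_trans z_le x_le.
nra.
Qed.

End cone.

Section chamber_geometry.
Variables (R : realType) (n : nat) (alpha omega : 'I_n -> 'rV[R]_n).
Hypothesis dual : forall i j, alpha i ⋅ omega j = (i == j)%:R.

Definition omega_dir j := (eucl_norm (omega j))^-1 *: omega j.

Definition omega_cos :=
  \big[Num.max/0]_(p : 'I_n * 'I_n | p.1 != p.2) (omega_dir p.1 ⋅ omega_dir p.2).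

Lemma omega_dir_unit j : omega_dir j ⋅ omega_dir j = 1.
Proof.
rewrite dotvZl dotvZr -eucl_norm_sqr mulrA -expr2 -exprMn mulVf ?expr1n //.
by rewrite gt_eqF ?(eucl_norm_dual_gt0 dual).
Qed.

Lemma omega_dir_cos_le j l : j != l -> omega_dir j ⋅ omega_dir l <= omega_cos.
Proof.
exact: (@le_bigmax_cond _ _ _ 0 (j, l) (fun p => p.1 != p.2)
  (fun p => omega_dir p.1 ⋅ omega_dir p.2)).
Qed.

Lemma omega_cos_ge0 : 0 <= omega_cos.
Proof. by rewrite /omega_cos; elim/big_rec: _ => // p c _ c0; rewrite le_max c0 orbT. Qed.

Lemma omega_cos_lt1 : omega_cos < 1.
Proof.
apply: bigmax_lt => // -[j l] /= jl; apply: dotv_lt1; rewrite ?omega_dir_unit //.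
apply: contra_neq (oner_neq0 R) => djl.
have := congr1 (dotv (alpha l)) djl; rewrite !dotvZr !dual eqxx eq_sym (negbTE jl) mulr0 mulr1.
by move/esym/eqP; rewrite invr_eq0 gt_eqF ?(eucl_norm_dual_gt0 dual).
Qed.

Lemma chamber_cone_expansion x :
  x = \sum_j (alpha j ⋅ x * eucl_norm (omega j)) *: omega_dir j.
Proof.
rewrite {1}(dual_expansion dual x); apply: eq_bigr => j _.
by rewrite scalerA mulrK // unitfE gt_eqF ?(eucl_norm_dual_gt0 dual).
Qed.

Variables (rho : 'rV[R]_n) (kk : 'I_n -> R).
Hypothesis rhoE : rho = \sum_i kk i *: alpha i.

Lemma rho_dotv x : rho ⋅ x = \sum_j kk j * (alpha j ⋅ x).
Proof. by rewrite rhoE dotv_suml; apply: eq_bigr => j _; rewrite dotvZl. Qed.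

Lemma rho_dotv_omega i : rho ⋅ omega i = kk i.
Proof. by rewrite rho_dotv; under eq_bigr do rewrite dual; exact: sumr_mul_delta. Qed.

Lemma rho_excess (k : R) : (0 < n)%N -> 0 <= k ->
    (forall i, k <= kk i / eucl_norm (omega i)) ->
  forall x z, chamber alpha x -> z <= eucl_norm x ->
  exists i, k * (1 - omega_cos) / 5 * eucl_norm (x - z *: omega_dir i) <= rho ⋅ x - k * z.
Proof.
move=> n_gt0 k_ge0 k_le x z x_in z_le.
pose u j := alpha j ⋅ x * eucl_norm (omega j).
have u_ge0 j : 0 <= u j by rewrite mulr_ge0 ?x_in ?eucl_norm_ge0.
have rho_ge : k * \sum_j u j <= rho ⋅ x.
  rewrite rho_dotv mulr_sumr; apply: ler_sum => j _.
  rewrite /u mulrA mulrAC; apply: ler_wpM2r; first exact: x_in.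
  by rewrite -ler_pdivlMr ?(eucl_norm_dual_gt0 dual).
have xE : x = \sum_j u j *: omega_dir j := chamber_cone_expansion x.
rewrite xE in z_le; have [i near] := cone_near_ray omega_dir_unit omega_dir_cos_le
  omega_cos_ge0 (ltW omega_cos_lt1) u_ge0 n_gt0 z_le.
exists i; rewrite -xE in near.
have := ler_wpM2l k_ge0 near; lra.
Qed.

Lemma chamber_box (i0 : 'I_n) :
  exists (p : R -> 'rV[R]_n) (C : R), forall z (y : 'rV[R]_n), 0 <= z ->
    (forall m, `|y 0 m| <= 1) ->
  [/\ chamber alpha (p z + y), z <= eucl_norm (p z + y) &
      rho ⋅ (p z + y) <= kk i0 / eucl_norm (omega i0) * z + C].
Proof.
pose a := eucl_norm (omega i0); have a_gt0 : 0 < a := eucl_norm_dual_gt0 dual i0.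
pose W := \sum_j omega j; pose lam := \sum_j l1_norm (alpha j).
pose c0 := (lam * `|omega i0 ⋅ W| + l1_norm (omega i0)) / a ^+ 2.
(* Since alpha_j(W) = 1, the shift by lam W keeps the unit cube in the chamber,
   and c0 compensates for its effect on omega_i0(x). *)
exists (fun z => (z / a + c0) *: omega i0 + lam *: W).
exists (c0 * kk i0 + lam * `|rho ⋅ W| + l1_norm rho).
move=> z y z_ge0 y_le1; set t := z / a + c0.
have dotv_y v : - l1_norm v <= v ⋅ y <= l1_norm v.
  by rewrite -ler_norml; exact: abs_dotv_le_l1_norm.
have lam_ge0 : 0 <= lam by apply: sumr_ge0 => j _; exact: l1_norm_ge0.
have t_ge0 : 0 <= t.
  apply: addr_ge0; first exact: divr_ge0 z_ge0 (ltW a_gt0).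
  by rewrite divr_ge0 ?exprn_ge0 ?addr_ge0 ?mulr_ge0 ?l1_norm_ge0 // ltW.
split.
- move=> j; rewrite !dotvDr !dotvZr dual /W (dotv_sum_dual dual) mulr1.
  have : l1_norm (alpha j) <= lam.
    by rewrite /lam (bigD1 j) //= lerDl sumr_ge0 // => l _; exact: l1_norm_ge0.
  have /andP[+ _] := dotv_y (alpha j); have := mulr_ge0 t_ge0 (ler0n R (j == i0)); lra.
- have : a * z <= omega i0 ⋅ (t *: omega i0 + lam *: W + y).
    rewrite !dotvDr !dotvZr -eucl_norm_sqr -/a.
    have : t * a ^+ 2 = a * z + (lam * `|omega i0 ⋅ W| + l1_norm (omega i0)).
      by rewrite /t /c0; field; rewrite gt_eqF.
    have := ler_wpM2l lam_ge0 (ler_norm (- (omega i0 ⋅ W))); rewrite normrN.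
    have /andP[+ _] := dotv_y (omega i0); lra.
  move/le_trans/(_ (dotv_le_eucl_norm _ _)); rewrite ler_pM2l //.
- rewrite !dotvDr !dotvZr rho_dotv_omega.
  have : t * kk i0 = kk i0 / a * z + c0 * kk i0 by rewrite /t; field; rewrite gt_eqF.
  have := ler_wpM2l lam_ge0 (ler_norm (rho ⋅ W)).
  have /andP[_] := dotv_y rho; lra.
Qed.

End chamber_geometry.

Import numFieldTopology.Exports numFieldNormedType.Exports.

Section iterated_integral.
Variable R : realType.
Local Notation mu := (@lebesgue_measure R).
Local Open Scope ereal_scope.

(* Unlike [ge0_le_integral], no measurability is needed: over [setT] the
   integral of a nonnegative function is a supremum over simple minorants. *)
Lemma ge0_le_integralT (f g : R -> \bar R) : (forall x, 0 <= f x) -> (forall x, f x <= g x) ->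
  \int[mu]_(x in [set: R]) f x <= \int[mu]_(x in [set: R]) g x.
Proof.
move=> f0 fg; have g0 x : 0 <= g x := le_trans (f0 x) (fg x).
rewrite !ge0_integralTE//; apply: ge_ereal_sup => _ [h /= hf <-].
by apply: ereal_sup_ubound; exists h => //= x; exact: le_trans (hf x) (fg x).
Qed.

Lemma iter_integral_ge0 n (f : 'rV[R]_n -> \bar R) :
  (forall x, 0 <= f x) -> 0 <= iter_integral f.
Proof.
elim: n f => [|n IH] f f0 /=; first exact: f0.
by apply: integral_ge0 => x _; apply: IH.
Qed.

Lemma ge0_le_iter_integral n (f g : 'rV[R]_n -> \bar R) :
  (forall x, 0 <= f x) -> (forall x, f x <= g x) -> iter_integral f <= iter_integral g.
Proof.
elim: n f g => [|n IH] f g f0 fg /=; first exact: fg.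
by apply: ge0_le_integralT => x; [apply: iter_integral_ge0 | apply: IH].
Qed.

Lemma row_mx_const_ord0 n (c : R) (v : 'rV[R]_n) :
  (row_mx (const_mx c : 'rV[R]_1) v : 'rV[R]_n.+1) ord0 ord0 = c.
Proof. by rewrite mxE; case: splitP => j //= _; rewrite mxE. Qed.

Lemma row_mx_const_lift n (c : R) (v : 'rV[R]_n) (m : 'I_n) :
  (row_mx (const_mx c : 'rV[R]_1) v : 'rV[R]_n.+1) ord0 (lift ord0 m) = v ord0 m.
Proof.
rewrite mxE; case: splitP => j /=; first by rewrite ord1.
by rewrite /bump /= => -[/val_inj->].
Qed.

Lemma iter_integral_sum_prod n N (w : 'I_N -> R) (h : 'I_N -> 'I_n -> R -> R)
    (r : 'I_N -> 'I_n -> R) :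
  (forall i, (0 <= w i)%R) -> (forall i m x, (0 <= h i m x)%R) ->
  (forall i m, measurable_fun [set: R] (h i m)) ->
  (forall i m, \int[mu]_(x in [set: R]) (h i m x)%:E = (r i m)%:E) ->
  iter_integral (fun x : 'rV[R]_n => (\sum_(i < N) w i * \prod_(m < n) h i m (x ord0 m))%:E)
  = (\sum_(i < N) w i * \prod_(m < n) r i m)%:E.
Proof.
elim: n w h r => [|n IH] w h r w0 h0 hm hr /=.
  by congr EFin; apply: eq_bigr => i _; rewrite !big_ord0.
have r0 i m : (0 <= r i m)%R.
  by rewrite -lee_fin -hr; apply: integral_ge0 => x _; rewrite lee_fin.
transitivity (\int[mu]_(c in [set: R])
    (\sum_(i < N) (w i * \prod_(m < n) r i (lift ord0 m)) * h i ord0 c)%:E).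
  apply: eq_integral => c _.
  transitivity (iter_integral (fun v : 'rV[R]_n => (\sum_(i < N)
      (w i * h i ord0 c) * \prod_(m < n) h i (lift ord0 m) (v ord0 m))%:E)).
    congr iter_integral; apply/funext => v; congr EFin; apply: eq_bigr => i _.
    rewrite big_ord_recl row_mx_const_ord0 mulrA; congr (_ * _)%R.
    by apply: eq_bigr => m _; rewrite row_mx_const_lift.
  rewrite (IH _ (fun i m => h i (lift ord0 m)) (fun i m => r i (lift ord0 m))) //.
    by congr EFin; apply: eq_bigr => i _; rewrite mulrAC.
  by move=> i; apply: mulr_ge0.
rewrite (_ : (fun c => _) = fun c => \sum_(i < N)
    ((w i * \prod_(m < n) r i (lift ord0 m))%:E * (h i ord0 c)%:E)); last first.
  by apply/funext => c; rewrite -sumEFin; apply: eq_bigr => i _; rewrite EFinM.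
have coef_ge0 i : (0 <= w i * \prod_(m < n) r i (lift ord0 m))%R.
  by rewrite mulr_ge0 //; apply: prodr_ge0.
rewrite ge0_integral_sum //; last 2 first.
- by move=> i; apply: measurable_funeM; apply/measurable_EFinP; exact: hm.
- by move=> i c _; rewrite -EFinM lee_fin mulr_ge0.
rewrite -sumEFin; apply: eq_bigr => i _.
rewrite ge0_integralZl_EFin ?coef_ge0 //; last 2 first.
- by move=> x _; rewrite lee_fin.
- by apply/measurable_EFinP; exact: hm.
by rewrite hr -EFinM big_ord_recl mulrAC mulrA.
Qed.

Lemma iter_integral_prod n (w : R) (h : 'I_n -> R -> R) (r : 'I_n -> R) :
  (0 <= w)%R -> (forall m x, (0 <= h m x)%R) -> (forall m, measurable_fun [set: R] (h m)) ->
  (forall m, \int[mu]_(x in [set: R]) (h m x)%:E = (r m)%:E) ->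
  iter_integral (fun x : 'rV[R]_n => (w * \prod_(m < n) h m (x ord0 m))%:E)
  = (w * \prod_(m < n) r m)%:E.
Proof.
move=> w0 h0 hm hr; have := @iter_integral_sum_prod n 1 (fun=> w) (fun=> h) (fun=> r)
  (fun=> w0) (fun=> h0) (fun=> hm) (fun=> hr).
rewrite big_ord1 => <-; congr iter_integral; apply/funext => x.
by rewrite big_ord1.
Qed.

End iterated_integral.

Section exponential_integrals.
Variable R : realType.
Local Notation mu := (@lebesgue_measure R).
Local Open Scope ereal_scope.

Lemma continuous_expR_abs (a c : R) : continuous (fun y : R => expR (- (a * `|y - c|)))%R.
Proof.
move=> z; apply: continuous_comp; last exact: continuous_expR.
apply: (@continuousN _ R^o); apply: continuousM => //; first exact: cst_continuous.
apply: continuous_comp; last exact: norm_continuous.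
by apply: continuousB => //; exact: cst_continuous.
Qed.

Lemma integral_expR_itv_ge0 (a : R) : (0 < a)%R ->
  \int[mu]_(x in `[0%R, +oo[) (expR (- (a * x)))%:E = (a^-1)%:E.
Proof.
move=> a0; have := integral_exponential_pdf a0.
rewrite /exponential_pdf (_ : (fun x => _) =
    (fun x => a%:E * (expR (- (a * x)))%:E) \_ `[0%R, +oo[); last first.
  by apply/funext => x; rewrite /patch; case: ifP => _ //; rewrite mulNr EFinM.
have mf : measurable_fun (`[0%R, +oo[ : set R) (fun x : R => (expR (- (a * x)))%:E).
  apply/measurable_EFinP; apply: measurable_funTS; apply: continuous_measurable_fun.
  move=> x; apply: continuous_comp; last exact: continuous_expR.
  by apply: (@continuousN _ R^o); apply: continuousM => //; exact: cst_continuous.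
rewrite -integral_mkcond ge0_integralZl_EFin //; last exact: ltW.
have : 0 <= \int[mu]_(x in `[0%R, +oo[) (expR (- (a * x)))%:E.
  by apply: integral_ge0 => x _; rewrite lee_fin expR_ge0.
case: (\int[mu]_(x in _) _) => // [r|] _ H; last by move: H; rewrite gt0_muley ?lte_fin.
by case: H => H; congr EFin; apply: (mulfI (lt0r_neq0 a0)); rewrite H mulfV // gt_eqF.
Qed.

Lemma integral_expR_abs (a c : R) : (0 < a)%R ->
  \int[mu]_(x in [set: R]) (expR (- (a * `|x - c|)))%:E = (2 / a)%:E.
Proof.
move=> a0; set G := fun y : R => expR (- (a * `|y - 0|))%R.
have dshift : (fun x : R => (x - c)%R)^`()%classic = cst 1%R.
  by apply/funext => x; rewrite derive1E deriveB // derive_id derive_cst subr0.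
transitivity (\int[mu]_(x in [set: R]) (G x)%:E).
  rewrite [RHS](@increasing_ge0_integration_by_substitutionT _ (fun x : R => (x - c)%R)).
  - by apply: eq_integral => x _; rewrite dshift /= mulr1 /G /= subr0.
  - by move=> x y xy; rewrite ltrD2r.
  - by rewrite dshift; exact: cst_continuous.
  - by rewrite dshift; apply/cvg_ex; exists 1%R; exact: cvg_cst.
  - by rewrite dshift; apply/cvg_ex; exists 1%R; exact: cvg_cst.
  - by move=> x; apply: derivableB.
  - exact: cvg_addrr_Ny.
  - exact: cvg_addrr.
  - exact: continuous_expR_abs.
  - by move=> x; exact: expR_ge0.
rewrite ge0_symfun_integralT; last 3 first.
- by move=> x; exact: expR_ge0.
- exact: continuous_expR_abs.
- by move=> x; rewrite /G /= !subr0 normrN.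
rewrite -set_itvcy EFinM -(integral_expR_itv_ge0 a0); congr (_ * _).
apply: eq_integral => x; rewrite inE /= in_itv /= andbT => x0.
by rewrite /G subr0 ger0_norm.
Qed.

Lemma integral_indic_itv (a b : R) : (a <= b)%R ->
  \int[mu]_(x in [set: R]) (\1_(`[a, b]%classic : set R) x)%:E = (b - a)%:E.
Proof.
move=> ab; rewrite integral_indic // setIT.
apply: eq_trans (lebesgue_measure_itv `[a, b]%R) _; rewrite /= lte_fin.
case: ltP => [_|ba]; first by rewrite EFinB.
have -> : b = a by apply/eqP; rewrite eq_le ba ab.
by rewrite subrr.
Qed.

End exponential_integrals.

Lemma rho_sum_dotv_dual_ge1 (R : realType) (n : nat) (Phi : seq 'rV[R]_n)
    (alpha omega : 'I_n -> 'rV[R]_n) :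
  (forall i j, alpha i ⋅ omega j = (i == j)%:R) -> is_base Phi alpha ->
  forall i, 1 <= rho_sum Phi alpha ⋅ omega i.
Proof.
move=> dual [alpha_in _ _] i.
rewrite /rho_sum dotv_suml (big_rem (alpha i)) ?alpha_in //=.
have -> : positive_root alpha (alpha i).
  by apply/forallP => j; rewrite (coords_dual dual) dual ler0n.
rewrite dual eqxx lerDl; apply: sumr_ge0 => b /forallP b_pos.
by rewrite -(coords_dual dual).
Qed.

Definition tail_integrand (R : realType) (n : nat) (Phi : seq 'rV[R]_n)
    (alpha : 'I_n -> 'rV[R]_n) (z : R) (x : 'rV[R]_n) : \bar R :=
  if `[< chamber alpha x /\ z <= eucl_norm x >]
  then (expR (- (rho_sum Phi alpha ⋅ x)))%:E else 0%E.

Lemma tail_integralE (R : realType) (n : nat) (Phi : seq 'rV[R]_n)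
    (alpha : 'I_n -> 'rV[R]_n) (z : R) :
  tail_integral Phi alpha z = iter_integral (tail_integrand Phi alpha z).
Proof. by []. Qed.

Section tail_integral_bounds.
Variables (R : realType) (n : nat) (Phi : seq 'rV[R]_n).
Variables (alpha omega : 'I_n -> 'rV[R]_n) (kk : 'I_n -> R) (k : R) (i0 : 'I_n).
Hypothesis n_gt0 : (0 < n)%N.
Hypothesis base : is_base Phi alpha.
Hypothesis dual : forall i j, alpha i ⋅ omega j = (i == j)%:R.
Hypothesis rhoE : rho_sum Phi alpha = \sum_i kk i *: alpha i.
Hypothesis k_le : forall i, k <= kk i / eucl_norm (omega i).
Hypothesis k_eq : k = kk i0 / eucl_norm (omega i0).

Local Notation rho := (rho_sum Phi alpha).
Local Notation integrand := (tail_integrand Phi alpha).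

Lemma tail_integrand_ge0 z x : (0 <= integrand z x)%E.
Proof. by rewrite /tail_integrand; case: asboolP; rewrite ?lee_fin ?expR_ge0. Qed.

Lemma k_gt0 : 0 < k.
Proof.
rewrite k_eq divr_gt0 ?(eucl_norm_dual_gt0 dual) // -(rho_dotv_omega dual rhoE).
exact: lt_le_trans ltr01 (rho_sum_dotv_dual_ge1 dual base i0).
Qed.

Lemma tail_integral_lower : exists2 C1, 0 < C1 & forall z, 0 <= z ->
  ((C1 * expR (- (k * z)))%:E <= tail_integral Phi alpha z)%E.
Proof.
have [p [C box]] := chamber_box dual rhoE i0; rewrite -k_eq in box.
exists (expR (- C) * 2 ^+ n); first by rewrite mulr_gt0 ?expR_gt0 ?exprn_gt0.
move=> z z_ge0; pose I m : set R := `[p z 0 m - 1, p z 0 m + 1]%classic.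
have indic_ge0 m y : 0 <= \1_(I m) y :> R by rewrite indicE; case: (_ \in _).
have -> : (expR (- C) * 2 ^+ n * expR (- (k * z)))%:E = iter_integral (fun x : 'rV[R]_n =>
    (expR (- (k * z + C)) * \prod_(m < n) \1_(I m) (x ord0 m))%:E).
  rewrite (@iter_integral_prod R n _ (fun m => \1_(I m)) (fun=> 2)) ?expR_ge0 //.
  - by rewrite prodr_const card_ord opprD expRD; congr EFin; ring.
  - by move=> m; apply: measurable_indic; exact: measurable_itv.
  - by move=> m; rewrite integral_indic_itv; [congr EFin; ring | lra].
rewrite tail_integralE; apply: ge0_le_iter_integral => x.
  by rewrite lee_fin mulr_ge0 ?expR_ge0 // prodr_ge0.
have [/forallP near|] := boolP [forall m, `|x 0 m - p z 0 m| <= 1].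
  have [|x_in z_le rho_le] := box z (x - p z) z_ge0.
    by move=> m; rewrite !mxE; exact: near.
  rewrite addrC subrK in x_in z_le rho_le.
  rewrite big1 => [|m _]; last first.
    rewrite indicE mem_set //= /I /= in_itv /=; have := near m; rewrite ler_norml.
    by case/andP => ? ?; apply/andP; split; lra.
  by rewrite mulr1 /tail_integrand asboolT // lee_fin ler_expR; lra.
rewrite negb_forall => /existsP[m far].
rewrite (bigD1 m) //= indicE memNset ?mul0r ?mulr0 ?tail_integrand_ge0 // /I /= in_itv /=.
by move=> /andP[? ?]; move: far; rewrite ler_norml; apply/negP/negPn/andP; split; lra.
Qed.

Let c := k * (1 - omega_cos omega) / 5 / n%:R.

Let c_gt0 : 0 < c.
Proof.
by rewrite !divr_gt0 ?mulr_gt0 ?k_gt0 ?ltr0n // subr_gt0 (omega_cos_lt1 dual).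
Qed.

Lemma tail_integrand_le z x : (integrand z x <= (\sum_(i < n) expR (- (k * z)) *
    \prod_(m < n) expR (- (c * `|x ord0 m - z * omega_dir omega i 0 m|)))%:E)%E.
Proof.
have term_ge0 i : 0 <= expR (- (k * z)) *
    \prod_(m < n) expR (- (c * `|x ord0 m - z * omega_dir omega i 0 m|)).
  by rewrite mulr_ge0 ?expR_ge0 // prodr_ge0 // => m _; exact: expR_ge0.
rewrite /tail_integrand; case: asboolP => [[x_in z_le]|_]; last by rewrite lee_fin sumr_ge0.
have [i excess] := rho_excess dual rhoE n_gt0 (ltW k_gt0) k_le x_in z_le.
rewrite lee_fin (bigD1 i) //=; apply: ler_wpDr; first exact: sumr_ge0.
rewrite -expR_sum -expRD ler_expR sumrN -mulr_sumr.
have l1E : \sum_(m < n) `|x ord0 m - z * omega_dir omega i 0 m|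
    = l1_norm (x - z *: omega_dir omega i).
  by apply: eq_bigr => m _; rewrite !mxE.
have c_n : c * n%:R = k * (1 - omega_cos omega) / 5 by rewrite /c divfK // pnatr_eq0 -lt0n.
have := ler_wpM2l (ltW c_gt0) (l1_norm_le_eucl_norm (x - z *: omega_dir omega i)).
by rewrite l1E mulrA c_n; lra.
Qed.

Lemma tail_integral_upper : exists2 C2, 0 < C2 & forall z,
  (tail_integral Phi alpha z <= (C2 * expR (- (k * z)))%:E)%E.
Proof.
exists (n%:R * (2 / c) ^+ n).
  by rewrite mulr_gt0 ?ltr0n // exprn_gt0 // divr_gt0 // c_gt0.
move=> z; rewrite tail_integralE.
apply: le_trans (ge0_le_iter_integral (@tail_integrand_ge0 z) (tail_integrand_le z)) _.
rewrite (@iter_integral_sum_prod R n n _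
  (fun i m y => expR (- (c * `|y - z * omega_dir omega i 0 m|))) (fun _ _ => 2 / c)) ?expR_ge0 //.
- by rewrite lee_fin prodr_const card_ord sumr_const card_ord -mulrnAr mulrC -mulr_natl.
- by move=> i m; apply: continuous_measurable_fun; exact: continuous_expR_abs.
- by move=> i m; exact: integral_expR_abs.
Qed.

End tail_integral_bounds.

Theorem lemma5p6 (R : realType) (n : nat) (Phi : seq 'rV[R]_n)
  (alpha : 'I_n -> 'rV[R]_n) (omega : 'I_n -> 'rV[R]_n) (kk : 'I_n -> R) (k : R) :
  (0 < n)%N ->
  is_root_system Phi ->
  is_base Phi alpha ->
  (forall i j, dotv (alpha i) (omega j) = (i == j)%:R) ->
  rho_sum Phi alpha = \sum_(i < n) kk i *: alpha i ->
  (forall i, k <= kk i / eucl_norm (omega i)) ->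
  (exists i, k = kk i / eucl_norm (omega i)) ->
  exists C1 C2 : R, 0 < C1 /\ 0 < C2 /\
    forall z : R, 0 < z ->
      ((C1 * expR (- (k * z)))%:E <= tail_integral Phi alpha z)%E /\
      (tail_integral Phi alpha z <= (C2 * expR (- (k * z)))%:E)%E.
Proof.
move=> n_gt0 _ base dual rhoE k_le [i0 k_eq].
have [C1 C1_gt0 lower] := tail_integral_lower dual rhoE k_eq.
have [C2 C2_gt0 upper] := tail_integral_upper n_gt0 base dual rhoE k_le k_eq.
exists C1, C2; do 2!split=> //; move=> z z_gt0.
by split; [exact: lower (ltW z_gt0) | exact: upper].
Qed.
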